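(* Let $X$ be a finite rack. There exists $N_0$ (depending on $X$) such that for every $N\ge N_0$, the natural semigroup homomorphism $S_X^*(N)\to\Gamma_X$, sending the class of $(x_1,\dots,x_n)$ to $x_1\cdots x_n$, is injective.
   Context: A rack is a set $X$ with an operation $x^y$ such that $x\mapsto x^y$ is bijective for each $y$ and $(z^x)^y=(z^y)^{x^y}$. Its connected components $C_1,\dots,C_k$ are the classes of the smallest equivalence relation with $x\sim x^y$. $B_n$ acts on $X^n$ from the right by $(\dots,x_i,x_{i+1},\dots)^{\sigma_i}=(\dots,x_{i+1},x_i^{x_{i+1}},\dots)$. The structure semigroup is $S_X=\bigsqcup_{n\ge1}X^n/B_n$ with concatenation. The structure group is $\Gamma_X=\langle X\mid y^{-1}xy=x^y\text{ for all }x,y\in X\rangle$. For nonnegative $n_1,\dots,n_k$ with sum $n$, $X^*(n_1,\dots,n_k)$ is the set of $(x_1,\dots,x_n)\in X^n$ with exactly $n_j$ entries in $C_j$ for each $j$ whose entries generate $X$ (lie in no proper subset closed under $x^y$), and $S_X^*(N)=\bigcup_{n_1,\dots,n_k\ge N}X^*(n_1,\dots,n_k)/B_n$. *)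

From mathcomp Require Import all_boot.
From Stdlib Require Import Relation_Operators.
Set Implicit Arguments. Unset Strict Implicit. Unset Printing Implicit Defensive.

Section Rack.
Variables (X : finType) (op : X -> X -> X).
(* op x y is the rack operation x^y *)

Definition is_rack : Prop :=
  (forall y, bijective (fun x => op x y)) /\
  (forall x y z, op (op z x) y = op (op z y) (op x y)).

(* Connected components: classes of the smallest equivalence relation with
   x ~ x^y, i.e. the reflexive-transitive closure of the symmetrized relation. *)
Definition rack_edge : rel X :=
  fun x z => [exists y, z == op x y] || [exists y, x == op z y].
Definition same_comp (x c : X) : bool := connect rack_edge x c.

Definition comp_count (s : seq X) (c : X) : nat := count (fun x => same_comp x c) s.

Definition generates (s : seq X) : Prop :=
  forall S : {set X},
    (forall a b, a \in S -> b \in S -> op a b \in S) ->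
    (forall x, x \in s -> x \in S) -> S = setT.

(* s represents an element of S_X^*(N): length n >= 1, entries generate X,
   and every connected component contains at least N entries. *)
Definition in_SstarN (N : nat) (s : seq X) : Prop :=
  0 < size s /\ generates s /\ (forall c : X, N <= comp_count s c).

(* Hurwitz (braid group) action: sigma_i maps (.., a, b, ..) to (.., b, a^b, ..).
   Two tuples have the same class in X^n/B_n iff they are related by the
   equivalence closure of these moves. *)
Definition hurwitz_step (s t : seq X) : Prop :=
  exists s1 s2 a b, s = s1 ++ a :: b :: s2 /\ t = s1 ++ b :: op a b :: s2.
Definition braid_equiv : seq X -> seq X -> Prop :=
  clos_refl_sym_trans (seq X) hurwitz_step.

(* Structure group Gamma_X = < X | y^-1 x y = x^y >, as words in the free group:
   a letter (x, true) is x, (x, false) is x^-1.  Equality in Gamma_X is the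
   smallest congruence (closed under equivalence and insertion in context)
   containing free cancellation and the defining relations. *)
Inductive gamma_base : seq (X * bool) -> seq (X * bool) -> Prop :=
  | gb_cancel_r x : gamma_base [:: (x, true); (x, false)] [::]
  | gb_cancel_l x : gamma_base [:: (x, false); (x, true)] [::]
  | gb_rel x y : gamma_base [:: (y, false); (x, true); (y, true)] [:: (op x y, true)].

Definition gamma_step (u v : seq (X * bool)) : Prop :=
  exists w1 w2 l r, gamma_base l r /\ u = w1 ++ l ++ w2 /\ v = w1 ++ r ++ w2.
Definition gamma_eq : seq (X * bool) -> seq (X * bool) -> Prop :=
  clos_refl_sym_trans (seq (X * bool)) gamma_step.

Definition to_word (s : seq X) : seq (X * bool) := [seq (x, true) | x <- s].

End Rack.

(* Let K be the exponent of Sym(X). A block y^K of K equal letters acts trivially by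
   conjugation, so it commutes with everything up to braiding, and so does
   z = prod_y y^K. Since x x^(K-1) prod_(y <> x) y^K ~ z, every letter is invertible
   modulo z, and equality in Gamma_X means s z^k ~ t z^k for some k. It remains to
   cancel blocks x^K on the right.
   If a generating tuple r has more than K|X| entries in the component of x, some y
   in that component occurs more than K times; gathering K copies of y at the end
   gives r ~ u y^K with u generating, and u y^K ~ u x^K because the set of such y is
   invariant under the rack action of the generating u. So appending x^K maps braid
   orbits with component counts d onto those with counts d + K e_x, and the number of
   orbits does not increase. Restricted to a residue class modulo K, these numbers
   form non-increasing functions on N^components, hence are eventually constant; where
   they are constant, the surjection is a bijection, which is the cancellation. *)
From mathcomp Require Import all_boot fingroup perm abelian.
From mathcomp Require Import boolp zify.
From Stdlib Require Import Relation_Operators.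
Set Implicit Arguments. Unset Strict Implicit. Unset Printing Implicit Defensive.

Lemma count_sum_mem (T : finType) (P : pred T) (r : seq T) :
  count P r = \sum_(y | P y) count_mem y r.
Proof.
elim: r => [|a r IH] /=; first by rewrite big1.
rewrite IH big_split /=; congr (_ + _).
rewrite big_mkcond (bigD1 a) //= eqxx big1 ?addn0; first by case: (P a).
by move=> y /negbTE ya; rewrite eq_sym ya; case: (P y).
Qed.

Lemma sum_eq_indicator (T : finType) (a : T) : \sum_(i : T) (i == a) = 1.
Proof. by rewrite (bigD1 a) //= eqxx big1 // => i /negbTE ->. Qed.

Lemma rem_cat_notin (T : eqType) (x : T) (p q : seq T) :
  x \notin p -> rem x (p ++ x :: q) = p ++ q.
Proof.
elim: p => [|y p IH] /=; first by rewrite eqxx.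
by rewrite inE negb_or => /andP[xy /IH ->]; rewrite eq_sym (negbTE xy).
Qed.

Lemma inv_preserves (T : finType) (R : {set T}) (f g : T -> T) :
  injective f -> cancel g f -> {in R, forall y, f y \in R} -> {in R, forall y, g y \in R}.
Proof.
move=> f_inj gK fR y yR.
have fRR : f @: R =i R.
  apply/subset_cardP; first exact: card_imset.
  by apply/subsetP => _ /imsetP[z zR ->]; apply: fR.
by move: yR; rewrite -fRR => /imsetP[z zR ->]; rewrite (f_inj _ _ (gK (f z))).
Qed.

Definition rclass (T : finType) (R : T -> T -> Prop) (A : {set T}) (s : T) : {set T} :=
  [set t in A | `[< R s t >]].
Definition nb_classes (T : finType) (R : T -> T -> Prop) (A : {set T}) : nat :=
  #|[set rclass R A s | s in A]|.

Section ClassCount.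
Variables (T1 T2 : finType) (R1 : T1 -> T1 -> Prop) (R2 : T2 -> T2 -> Prop).
Hypotheses (R1_refl : forall s, R1 s s) (R2_sym : forall s t, R2 s t -> R2 t s)
  (R2_trans : forall s t u, R2 s t -> R2 t u -> R2 s u).
Variables (A1 : {set T1}) (A2 : {set T2}) (f : T1 -> T2).
Hypotheses (fA : {in A1, forall s, f s \in A2})
  (fR : forall s t, R1 s t -> R2 (f s) (f t))
  (f_onto : forall r, r \in A2 -> exists2 s, s \in A1 & R2 r (f s)).

Let push (C : {set T1}) : {set T2} :=
  [set r in A2 | `[< exists2 s, s \in C & R2 (f s) r >]].

Let rclass2_eq s t : R2 s t -> rclass R2 A2 s = rclass R2 A2 t.
Proof.
move=> Rst; apply/setP => u; rewrite !inE; congr (_ && _).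
by apply/asboolP/asboolP => [/(R2_trans (R2_sym Rst))|/(R2_trans Rst)].
Qed.

Let push_rclass s : s \in A1 -> push (rclass R1 A1 s) = rclass R2 A2 (f s).
Proof.
move=> sA; apply/setP => r; rewrite !inE; congr (_ && _).
apply/asboolP/asboolP => [[s']|Rsr]; last by exists s; rewrite // inE sA; apply/asboolP.
by rewrite inE => /andP[_ /asboolP/fR]; apply: R2_trans.
Qed.

Let classes_push : [set rclass R2 A2 r | r in A2] = push @: [set rclass R1 A1 s | s in A1].
Proof.
apply/setP => C; apply/imsetP/imsetP => [[r rA ->]|[D /imsetP[s sA ->] ->]].
- have [s sA Rrs] := f_onto rA.
  by exists (rclass R1 A1 s); [apply: imset_f | rewrite push_rclass // (rclass2_eq Rrs)].
- by exists (f s); [exact: fA | rewrite push_rclass].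
Qed.

Lemma leq_nb_classes : nb_classes R2 A2 <= nb_classes R1 A1.
Proof. by rewrite /nb_classes classes_push leq_imset_card. Qed.

Lemma nb_classes_eq_reflect : nb_classes R2 A2 = nb_classes R1 A1 ->
  {in A1 &, forall s t, R2 (f s) (f t) -> R1 s t}.
Proof.
rewrite /nb_classes classes_push => /eqP/imset_injP push_inj s t sA tA Rst.
have same_class : rclass R1 A1 s = rclass R1 A1 t.
  by apply: push_inj; rewrite ?imset_f // !push_rclass // (rclass2_eq Rst).
have : t \in rclass R1 A1 t by rewrite inE tA; apply/asboolP.
by rewrite -same_class inE => /andP[_ /asboolP].
Qed.

End ClassCount.

Lemma exists_argmin (T : Type) (F : T -> nat) : T -> exists t0, forall t, F t0 <= F t.
Proof.
move=> t; have ex_val : exists n, `[< exists t, F t = n >].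
  by exists (F t); apply/asboolP; exists t.
case: (ex_minnP ex_val) => _ /asboolP[t0 <-] minF.
by exists t0 => t'; apply: minF; apply/asboolP; exists t'.
Qed.

Section Stabilization.
Variable I : finType.

Definition incr (m : {ffun I -> nat}) (i : I) : {ffun I -> nat} := [ffun j => m j + (j == i)].

Lemma nonincreasing_ffun (F : {ffun I -> nat} -> nat) :
  (forall m i, F (incr m i) <= F m) ->
  forall m m' : {ffun I -> nat}, (forall i, m i <= m' i) -> F m' <= F m.
Proof.
move=> Fincr m m'; have [k] := ubnP (\sum_i (m' i - m i)).
elim: k m' => // k IH m' dist le_mm'.
case: (pickP [pred i | m i < m' i]) => [i /= lt_mi|eq_m]; last first.
  suff -> : m' = m by [].
  apply/ffunP => j; apply/eqP; rewrite eqn_leq le_mm' leqNgt andbT.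
  by have := eq_m j; rewrite /= => ->.
pose m'' := [ffun j => m' j - (j == i)].
have le_mm'' j : m j <= m'' j by rewrite ffunE; have := le_mm' j; case: eqP => [->|]; lia.
have -> : m' = incr m'' i by apply/ffunP => j; rewrite !ffunE; case: eqP => [->|]; lia.
apply: leq_trans (Fincr _ _) (IH _ _ le_mm'').
have split_sum (g : {ffun I -> nat}) :
    \sum_j (g j - m j) = g i - m i + \sum_(j | j != i) (g j - m j) by rewrite (bigD1 i).
rewrite split_sum; rewrite split_sum in dist.
have : \sum_(j | j != i) (m'' j - m j) <= \sum_(j | j != i) (m' j - m j).
  by apply: leq_sum => j /negbTE ji; rewrite ffunE ji subn0.
move: dist; rewrite ffunE eqxx; lia.
Qed.

Lemma nonincreasing_ffun_stable (F : {ffun I -> nat} -> nat) :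
  (forall m i, F (incr m i) <= F m) ->
  exists n, forall m : {ffun I -> nat}, (forall i, n <= m i) -> forall i, F (incr m i) = F m.
Proof.
move=> Fincr; have [m0 minF] := exists_argmin F [ffun=> 0].
have const (m : {ffun I -> nat}) : (forall i, \max_j m0 j <= m i) -> F m = F m0.
  move=> ge_m; apply/eqP; rewrite eqn_leq minF andbT.
  by apply: nonincreasing_ffun => // i; apply: leq_trans (leq_bigmax i) (ge_m i).
exists (\max_j m0 j) => m ge_m i; rewrite !const // => j.
by rewrite ffunE; apply: leq_trans (ge_m j) (leq_addr _ _).
Qed.

Lemma nonincreasing_family_stable (J : finType) (F : J -> {ffun I -> nat} -> nat) :
  (forall r m i, F r (incr m i) <= F r m) ->
  exists n, forall m : {ffun I -> nat}, (forall i, n <= m i) ->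
    forall r i, F r (incr m i) = F r m.
Proof.
move=> Fincr; have /fin_all_exists[n stable] := fun r => nonincreasing_ffun_stable (Fincr r).
exists (\max_r n r) => m ge_m r; apply: stable => i.
exact: leq_trans (leq_bigmax r) (ge_m i).
Qed.

End Stabilization.

Section Braid.
Variables (X : finType) (op : X -> X -> X).
Local Notation be := (braid_equiv op).

Lemma be_refl s : be s s. Proof. exact: rst_refl. Qed.
Lemma be_sym s t : be s t -> be t s. Proof. exact: rst_sym. Qed.
Lemma be_trans s t u : be s t -> be t u -> be s u. Proof. exact: rst_trans. Qed.

Lemma be_cat p q s t : be s t -> be (p ++ s ++ q) (p ++ t ++ q).
Proof.
elim=> {s t} [s t [s1 [s2 [a [b [-> ->]]]]]| s | s t _ | s t u _ st _ tu].
- by apply: rst_step; exists (p ++ s1), (s2 ++ q), a, b; rewrite -!catA.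
- exact: be_refl.
- exact: be_sym.
- exact: be_trans st tu.
Qed.

Lemma be_catl p s t : be s t -> be (p ++ s) (p ++ t).
Proof. by move/(be_cat p [::]); rewrite !cats0. Qed.

Lemma be_catr q s t : be s t -> be (s ++ q) (t ++ q).
Proof. exact: be_cat [::] q s t. Qed.

Lemma be_cons a s t : be s t -> be (a :: s) (a :: t).
Proof. exact: be_catl [:: a] s t. Qed.

Lemma be_swap a b s : be (a :: b :: s) (b :: op a b :: s).
Proof. by apply: rst_step; exists [::], s, a, b. Qed.

Definition act (s : seq X) (y : X) : X := foldl op y s.

Lemma be_cons_rcons_act x s : be (x :: s) (s ++ [:: act s x]).
Proof.
elim: s x => [|b s IH] x /=; first exact: be_refl.
exact: be_trans (be_swap _ _ _) (be_cons _ (IH _)).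
Qed.

Lemma be_rcons_cons m a : be (m ++ [:: a]) (a :: map (op^~ a) m).
Proof.
elim: m => [|y m IH] /=; first exact: be_refl.
exact: be_trans (be_cons y IH) (be_swap _ _ _).
Qed.

Definition acts_trivially (c : seq X) : Prop := forall y, act c y = y.

Lemma acts_trivially_cat c d :
  acts_trivially c -> acts_trivially d -> acts_trivially (c ++ d).
Proof. by move=> c1 d1 y; rewrite /act foldl_cat; apply: (etrans (d1 _)); apply: c1. Qed.

Lemma be_trivial_cons a c : acts_trivially c -> be (a :: c) (c ++ [:: a]).
Proof. by move=> c1; have := be_cons_rcons_act a c; rewrite c1. Qed.

Lemma be_trivial_comm c s : acts_trivially c -> be (s ++ c) (c ++ s).
Proof.
move=> c1; elim: s => [|a s IH] /=; first by rewrite cats0; apply: be_refl.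
apply: be_trans (be_cons a IH) _.
by have := be_catr s (be_trivial_cons a c1); rewrite -catA.
Qed.

Lemma rack_edge_sym : symmetric (rack_edge op).
Proof. by move=> x y; rewrite /rack_edge orbC. Qed.

Local Notation comp_sym := (sym_connect_sym rack_edge_sym).

Definition component : Type := {c : X | roots (rack_edge op) c}.

Definition comp_of (x : X) : component :=
  exist (roots (rack_edge op)) _ (roots_root comp_sym x).

Lemma same_comp_val x (i : component) : same_comp op x (val i) = (i == comp_of x).
Proof.
case: i => c c_root; rewrite -val_eqE /=; move/eqP: c_root => c_root.
by rewrite /same_comp (sameP (rootP comp_sym) eqP) c_root eq_sym.
Qed.

Lemma comp_of_val (i : component) : comp_of (val i) = i.
Proof. by apply/eqP; rewrite eq_sym -same_comp_val; apply: connect0. Qed.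

Lemma same_comp_comp_of x y : same_comp op x y = (comp_of x == comp_of y).
Proof. by rewrite /same_comp (sameP (rootP comp_sym) eqP) -val_eqE. Qed.

Definition comp_counts (s : seq X) : {ffun component -> nat} :=
  [ffun i => comp_count op s (val i)].

Lemma comp_counts_cat s t i : comp_counts (s ++ t) i = comp_counts s i + comp_counts t i.
Proof. by rewrite !ffunE /comp_count count_cat. Qed.

Lemma comp_counts_nseq n x i : comp_counts (nseq n x) i = n * (i == comp_of x).
Proof. by rewrite ffunE /comp_count count_nseq same_comp_val mulnC. Qed.

Lemma sum_comp_counts s : \sum_i comp_counts s i = size s.
Proof.
elim: s => [|a s IH]; first by rewrite big1 // => i _; rewrite ffunE.
rewrite -cat1s (eq_bigr _ (fun i _ => comp_counts_cat _ _ i)) big_split /= IH.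
by rewrite (eq_bigr _ (fun i _ => comp_counts_nseq 1 a i)) -big_distrr sum_eq_indicator.
Qed.

Lemma count_comp_counts r x : count (same_comp op ^~ x) r = comp_counts r (comp_of x).
Proof.
by rewrite ffunE; apply: eq_count => y; rewrite same_comp_val same_comp_comp_of eq_sym.
Qed.

Lemma comp_counts_be s t : be s t -> comp_counts s = comp_counts t.
Proof.
elim=> {s t} [s t [s1 [s2 [a [b [-> ->]]]]]| s | s t _ -> | s t u _ -> _ ->] //.
apply/ffunP => i; rewrite !comp_counts_cat; congr (_ + _).
have ab : comp_of (op a b) = comp_of a.
  apply/eqP; rewrite eq_sym -same_comp_comp_of; apply: connect1.
  by apply/orP; left; apply/existsP; exists b.
by rewrite !ffunE /comp_count /= !same_comp_val ab addnCA.
Qed.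

Section Rack.
Hypothesis hrack : is_rack op.
Local Notation generates := (generates op).

Lemma op_inj y : injective (op^~ y).
Proof. exact: bij_inj (hrack.1 y). Qed.

Definition rinv (a : X) : X -> X := invF (@op_inj a).

Lemma op_rinv a : cancel (rinv a) (op^~ a). Proof. exact: f_invF. Qed.
Lemma rinv_op a : cancel (op^~ a) (rinv a). Proof. exact: invF_f. Qed.

Lemma be_cons_rcons_rinv a m : be (a :: m) (map (rinv a) m ++ [:: a]).
Proof.
apply: be_sym; apply: be_trans (be_rcons_cons _ _) _.
by rewrite -map_comp (eq_map (op_rinv a)) map_id; apply: be_refl.
Qed.

Lemma be_move_last p a q : be (p ++ a :: q) ((p ++ map (rinv a) q) ++ [:: a]).
Proof. by rewrite -catA; apply: be_catl; apply: be_cons_rcons_rinv. Qed.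

Definition period : nat := exponent [set: {perm X}].

Lemma period_gt0 : 0 < period. Proof. exact: exponent_gt0. Qed.

Lemma acts_trivially_nseq y : acts_trivially (nseq period y).
Proof.
have act_nseq n x : act (nseq n y) x = iter n (op^~ y) x.
  by elim: n x => // n IH x; rewrite iterSr -IH.
move=> x; rewrite act_nseq.
have := congr1 (fun p : {perm X} => p x) (expg_exponent (in_setT (perm (@op_inj y)))).
by rewrite permX perm1 => {2}<-; apply: eq_iter => z; rewrite permE.
Qed.

Local Notation K := period.

Lemma generates_sub s t : generates s -> {subset s <= t} -> generates t.
Proof. by move=> gs st S opS tS; apply: gs => // x /st/tS. Qed.

Lemma generates_move_last p a q :
  a \in p -> generates (p ++ a :: q) -> generates (p ++ map (rinv a) q).
Proof.
move=> ap gs S opS sS; apply: gs => // x; rewrite mem_cat inE => /or3P[xp|/eqP->|xq].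
- by apply: sS; rewrite mem_cat xp.
- by apply: sS; rewrite mem_cat ap.
- rewrite -(op_rinv a x); apply: opS; apply: sS; rewrite mem_cat ?ap //.
  by rewrite map_f ?orbT.
Qed.

Lemma split_last_copy (y : X) k s : k.+2 <= count_mem y s ->
  exists p q, s = p ++ y :: q /\ k.+1 <= count_mem y p.
Proof.
elim/last_ind: s => [|s w IH] //; rewrite -cats1 count_cat /= addn0.
case: eqP => [<-|_]; rewrite ?addn1 ?addn0 => cnt; first by exists s, [::].
by have [p [q [-> cnt_p]]] := IH cnt; exists p, (q ++ [:: w]); rewrite -catA.
Qed.

Lemma be_gather_copies (y : X) k s : k < count_mem y s ->
  exists u, [/\ be s (u ++ nseq k y), y \in u & (generates s -> generates u)].
Proof.
elim: k s => [|k IH] s cnt.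
  by exists s; rewrite cats0 -has_pred1 has_count; split=> //; apply: be_refl.
have [p [q [def_s cnt_p]]] := split_last_copy cnt.
have yp : y \in p by rewrite -has_pred1 has_count; apply: leq_trans cnt_p.
have /IH[u [su yu gu]] : k < count_mem y (p ++ map (rinv y) q).
  by rewrite count_cat; apply: leq_trans cnt_p (leq_addr _ _).
exists u; split=> // [|gs]; last by apply/gu/generates_move_last; rewrite -?def_s.
rewrite def_s; apply: be_trans (be_move_last _ _ _) _.
by rewrite -addn1 nseqD catA; apply: be_catr.
Qed.

Lemma preserved_by_all (R : {set X}) s : generates s ->
  {in s, forall a, {in R, forall y, op y a \in R}} -> forall b, {in R, forall y, op y b \in R}.
Proof.
move=> gs sR; pose B := [set b | [forall y in R, op y b \in R]].
have inB b : reflect {in R, forall y, op y b \in R} (b \in B).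
  by rewrite inE; apply: (iffP forall_inP).
suff BT : B = setT by move=> b; apply/inB; rewrite BT inE.
apply: gs => [b1 b2 /inB B1 /inB B2|a /sR/inB //].
apply/inB => y yR; have wR := inv_preserves (@op_inj b2) (op_rinv b2) B2 yR.
by rewrite -(op_rinv b2 y) -hrack.2; apply/B2/B1.
Qed.

Lemma component_preserved (R : {set X}) : (forall b, {in R, forall y, op y b \in R}) ->
  {in R, forall y x, same_comp op y x -> x \in R}.
Proof.
move=> opR; have edgeR y x : rack_edge op y x -> y \in R -> x \in R.
  case/orP => /existsP[b /eqP->]; first exact: opR.
  by move/(inv_preserves (@op_inj b) (op_rinv b) (opR b)); rewrite rinv_op.
have closedR : closed (rack_edge op) R.
  by move=> y x yx; apply/idP/idP; apply: edgeR; rewrite // /rack_edge orbC.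
by move=> y yR x /(closed_connect closedR); rewrite yR => <-.
Qed.

Lemma be_block_rinv u a y : a \in u -> be (u ++ nseq K y) (u ++ nseq K (rinv a y)).
Proof.
case/splitPr => p q.
apply: be_trans (be_catr _ (be_move_last p a q)) _; apply: be_sym.
apply: be_trans (be_catr _ (be_move_last p a q)) _; rewrite -!catA; do 2!apply: be_catl.
apply: be_trans (be_trivial_cons a (acts_trivially_nseq _)) _; apply: be_sym.
by have := be_cons_rcons_rinv a (nseq K y); rewrite map_nseq.
Qed.

Lemma be_exchange_block u y x : generates u -> same_comp op y x ->
  be (u ++ nseq K y) (u ++ nseq K x).
Proof.
move=> gu yx; pose R := [set z | `[< be (u ++ nseq K y) (u ++ nseq K z) >]].
have inR z : reflect (be (u ++ nseq K y) (u ++ nseq K z)) (z \in R).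
  by rewrite inE; apply: asboolP.
have rinvR a : a \in u -> {in R, forall z, rinv a z \in R}.
  by move=> au z /inR yz; apply/inR; apply: be_trans yz (be_block_rinv _ au).
have opR := preserved_by_all gu (fun a au =>
  inv_preserves (can_inj (op_rinv a)) (rinv_op a) (rinvR a au)).
by apply/inR; apply: (component_preserved opR) yx; apply/inR; apply: be_refl.
Qed.

Lemma be_split_block r x : generates r -> K * #|X| < count (same_comp op ^~ x) r ->
  exists u, generates u /\ be r (u ++ nseq K x).
Proof.
move=> gr many.
have [y yx Ky] : exists2 y, same_comp op y x & K < count_mem y r.
  case: (pickP (fun y => same_comp op y x && (K < count_mem y r))) => [y /andP[]|none].
    by exists y.
  move: many; rewrite count_sum_mem big_mkcond ltnNge => /negP[].
  rewrite mulnC -sum_nat_const; apply: leq_sum => y _.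
  by have := none y; case: (same_comp op y x) => //= /negbT; rewrite -leqNgt.
have [u [ru yu gu]] := be_gather_copies Ky.
by exists u; split; [exact: gu | apply: be_trans ru (be_exchange_block (gu gr) yx)].
Qed.

Definition gen_tuples (d : {ffun component -> nat}) : {set (\sum_i d i).-tuple X} :=
  [set t : (\sum_i d i).-tuple X | `[< generates t >] && (comp_counts t == d)].

Definition nb_orbits (d : {ffun component -> nat}) : nat :=
  nb_classes (fun s t : (\sum_i d i).-tuple X => be s t) (gen_tuples d).

Lemma gen_tupleP d u : generates u -> comp_counts u = d ->
  exists2 t, t \in gen_tuples d & val t = u.
Proof.
move=> gu u_counts; have size_u : size u == \sum_i d i by rewrite -u_counts sum_comp_counts.
by exists (Tuple size_u); rewrite // inE u_counts eqxx andbT; apply/asboolP.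
Qed.

Definition add_block (d : {ffun component -> nat}) (x : X) : {ffun component -> nat} :=
  [ffun i => d i + K * (i == comp_of x)].

Lemma sum_add_block d x : \sum_i add_block d x i = \sum_i d i + K.
Proof.
by rewrite (eq_bigr _ (fun i _ => ffunE _ i)) big_split /= -big_distrr /= sum_eq_indicator muln1.
Qed.

Lemma comp_counts_block u x : comp_counts (u ++ nseq K x) = add_block (comp_counts u) x.
Proof. by apply/ffunP => i; rewrite comp_counts_cat comp_counts_nseq [RHS]ffunE. Qed.

Lemma add_block_inj x : injective (add_block^~ x).
Proof.
by move=> d1 d2 /ffunP eq_d; apply/ffunP => i; have := eq_d i; rewrite !ffunE => /addIn.
Qed.

Section AddBlock.
Variables (d : {ffun component -> nat}) (x : X).
Hypothesis many_x : K * #|X| < d (comp_of x).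

Let append (t : (\sum_i d i).-tuple X) : (\sum_i add_block d x i).-tuple X :=
  tcast (esym (sum_add_block d x)) (cat_tuple t (nseq_tuple K x)).

Let val_append t : val (append t) = val t ++ nseq K x.
Proof. exact: val_tcast. Qed.

Let append_gen : {in gen_tuples d, forall t, append t \in gen_tuples (add_block d x)}.
Proof.
move=> t; rewrite !inE val_append comp_counts_block => /andP[/asboolP gt /eqP->].
by rewrite eqxx andbT; apply/asboolP; apply: generates_sub gt _ => y yt; rewrite mem_cat yt.
Qed.

Let append_be s t : be (val s) (val t) -> be (val (append s)) (val (append t)).
Proof. by rewrite !val_append; apply: be_catr. Qed.

Let append_onto r : r \in gen_tuples (add_block d x) ->
  exists2 t, t \in gen_tuples d & be (val r) (val (append t)).
Proof.
rewrite inE => /andP[/asboolP gr /eqP r_counts].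
have [|u [gu ru]] := be_split_block gr (x := x).
  by rewrite count_comp_counts r_counts ffunE; apply: leq_trans many_x (leq_addr _ _).
have u_counts : comp_counts u = d.
  by apply: (@add_block_inj x); rewrite -comp_counts_block -(comp_counts_be ru).
have [t td t_u] := gen_tupleP gu u_counts.
by exists t; rewrite // val_append t_u.
Qed.

Lemma leq_nb_orbits_add_block : nb_orbits (add_block d x) <= nb_orbits d.
Proof.
by apply: (leq_nb_classes _ _ _ append_gen append_be append_onto) => [s|s t|s t u];
  [apply: be_refl | apply: be_sym | apply: be_trans].
Qed.

Lemma nb_orbits_add_block_eq : nb_orbits (add_block d x) = nb_orbits d ->
  forall u v, generates u -> generates v -> comp_counts u = d -> comp_counts v = d ->
  be (u ++ nseq K x) (v ++ nseq K x) -> be u v.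
Proof.
move=> eq_nb u v gu gv u_counts v_counts.
have reflect_be : {in gen_tuples d &, forall s t,
    be (val (append s)) (val (append t)) -> be (val s) (val t)}.
  by apply: (nb_classes_eq_reflect _ _ _ append_gen append_be append_onto eq_nb)
    => [s|s t|s t w]; [apply: be_refl | apply: be_sym | apply: be_trans].
have [s sd <-] := gen_tupleP gu u_counts; have [t td <-] := gen_tupleP gv v_counts.
by rewrite -!val_append; apply: reflect_be.
Qed.

End AddBlock.

Definition profile (r : {ffun component -> 'I_K}) (m : {ffun component -> nat}) :
    {ffun component -> nat} :=
  [ffun i => (K * #|X|).+1 + r i + K * m i].

Lemma profile_incr r m x : profile r (incr m (comp_of x)) = add_block (profile r m) x.
Proof. by apply/ffunP => i; rewrite !ffunE mulnDr addnA. Qed.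

Lemma profile_many r m x : K * #|X| < profile r m (comp_of x).
Proof. by rewrite ffunE -addnA leq_addr. Qed.

Lemma be_cancel_block_eventually : exists N0, forall u v x,
  generates u -> generates v -> (forall i, N0 <= comp_counts u i) ->
  be (u ++ nseq K x) (v ++ nseq K x) -> be u v.
Proof.
have mono r m i : nb_orbits (profile r (incr m i)) <= nb_orbits (profile r m).
  by rewrite -[i]comp_of_val profile_incr leq_nb_orbits_add_block ?profile_many.
have [n stable] := nonincreasing_family_stable mono.
exists ((K * #|X|).+1 + K * n) => u v x gu gv big_u uv.
pose d := comp_counts u; pose N1 := (K * #|X|).+1.
pose r : {ffun component -> 'I_K} := [ffun i => Ordinal (ltn_pmod (d i - N1) period_gt0)].
pose m : {ffun component -> nat} := [ffun i => (d i - N1) %/ K].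
have d_profile : profile r m = d.
  apply/ffunP => i; have := big_u i; rewrite !ffunE /= -/N1 => big_ui.
  rewrite -addnA [_ %% K + _]addnC mulnC -divn_eq subnKC //.
  exact: leq_trans (leq_addr _ _) big_ui.
have big_m i : n <= m i.
  by rewrite ffunE leq_divRL ?period_gt0 //; have := big_u i; rewrite -/d -/N1; lia.
have v_counts : comp_counts v = d.
  by apply: (@add_block_inj x); rewrite -!comp_counts_block (comp_counts_be uv).
apply: (nb_orbits_add_block_eq (d := d) (x := x) _ _ gu gv) => //.
  by rewrite -d_profile profile_many.
by rewrite -d_profile -profile_incr stable.
Qed.

Definition blocks (L : seq X) : seq X := flatten [seq nseq K y | y <- L].

Lemma blocks_cat L1 L2 : blocks (L1 ++ L2) = blocks L1 ++ blocks L2.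
Proof. by rewrite /blocks map_cat flatten_cat. Qed.

Lemma blocks1 x : blocks [:: x] = nseq K x.
Proof. exact: cats0. Qed.

Lemma acts_trivially_blocks L : acts_trivially (blocks L).
Proof.
by elim: L => [y //|y L IH]; apply: acts_trivially_cat (acts_trivially_nseq y) IH.
Qed.

Lemma be_cancel_blocks_eventually : exists N0, forall L u v,
  generates u -> generates v -> (forall i, N0 <= comp_counts u i) ->
  be (u ++ blocks L) (v ++ blocks L) -> be u v.
Proof.
have [N0 cancel] := be_cancel_block_eventually.
exists N0; elim/last_ind => [|L x IH] u v gu gv big_u; first by rewrite !cats0.
rewrite -cats1 blocks_cat blocks1 !catA => uv.
apply: (IH _ _ gu gv big_u); apply: (cancel _ _ x) uv.
- by apply: generates_sub gu _ => y yu; rewrite mem_cat yu.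
- by apply: generates_sub gv _ => y yv; rewrite mem_cat yv.
- by move=> i; rewrite comp_counts_cat; apply: leq_trans (big_u i) (leq_addr _ _).
Qed.

Definition central (k : nat) : seq X := blocks (flatten (nseq k (enum X))).

Lemma central_add k l : central (k + l) = central k ++ central l.
Proof. by rewrite /central nseqD flatten_cat blocks_cat. Qed.

Lemma be_central_comm k s : be (s ++ central k) (central k ++ s).
Proof. exact: be_trivial_comm (acts_trivially_blocks _). Qed.

Definition coinv (x : X) : seq X := nseq K.-1 x ++ blocks (rem x (enum X)).

Lemma be_central1 x : be (central 1) (nseq K x ++ blocks (rem x (enum X))).
Proof.
rewrite /central /= cats0; move: (enum_uniq X); have : x \in enum X by rewrite mem_enum.
case/splitPr => p q; rewrite cat_uniq /= negb_or => /and3P[_ /andP[xp _] _].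
rewrite rem_cat_notin // !blocks_cat /= !catA; apply: be_catr; apply: be_sym.
exact: be_trivial_comm (acts_trivially_blocks _).
Qed.

Lemma be_cons_coinv x : be (x :: coinv x) (central 1).
Proof.
rewrite /coinv -cat_cons -[x :: _]/(nseq K.-1.+1 x) prednK ?period_gt0 //.
exact: be_sym (be_central1 x).
Qed.

Lemma be_coinv_rcons x : be (coinv x ++ [:: x]) (central 1).
Proof.
rewrite /coinv -catA.
apply: be_trans (be_catl _ (be_sym (be_trivial_comm [:: x] (acts_trivially_blocks _)))) _.
rewrite catA -[[:: x]]/(nseq 1 x) -nseqD addn1 prednK ?period_gt0 //.
exact: be_sym (be_central1 x).
Qed.

Definition word_num (w : seq (X * bool)) : seq X :=
  flatten [seq if l.2 then [:: l.1] else coinv l.1 | l <- w].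

Definition word_den (w : seq (X * bool)) : nat := count (fun l => ~~ l.2) w.

Lemma word_num_cat w1 w2 : word_num (w1 ++ w2) = word_num w1 ++ word_num w2.
Proof. by rewrite /word_num map_cat flatten_cat. Qed.

Lemma word_den_cat w1 w2 : word_den (w1 ++ w2) = word_den w1 + word_den w2.
Proof. exact: count_cat. Qed.

Lemma word_num_to_word s : word_num (to_word s) = s.
Proof. by rewrite /word_num -map_comp; apply: flatten_seq1. Qed.

Lemma word_den_to_word s : word_den (to_word s) = 0.
Proof. by rewrite /word_den; elim: s. Qed.

(* Equality in the localisation of the braid monoid at the central element
   [central 1], a word [w] being read as [word_num w] divided by [central (word_den w)]. *)
Definition loc_eq (u v : seq (X * bool)) : Prop := exists k,
  be (word_num u ++ central (word_den v + k)) (word_num v ++ central (word_den u + k)).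

Lemma loc_eq_refl u : loc_eq u u.
Proof. by exists 0; apply: be_refl. Qed.

Lemma loc_eq_sym u v : loc_eq u v -> loc_eq v u.
Proof. by case=> k uv; exists k; apply: be_sym. Qed.

Lemma loc_eq_trans u v w : loc_eq u v -> loc_eq v w -> loc_eq u w.
Proof.
case=> [k uv] [l vw]; exists (word_den v + k + l).
have -> : word_den w + (word_den v + k + l) = (word_den v + k) + (word_den w + l) by lia.
have -> : word_den u + (word_den v + k + l) = (word_den v + l) + (word_den u + k) by lia.
rewrite (central_add (word_den v + k)) (central_add (word_den v + l)) !catA.
apply: be_trans (be_catr _ uv) _; rewrite -!catA.
apply: be_trans (be_catl _ (be_central_comm _ _)) _; rewrite !catA.
exact: be_catr vw.
Qed.

Lemma loc_eq_cat w1 w2 l r : loc_eq l r -> loc_eq (w1 ++ l ++ w2) (w1 ++ r ++ w2).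
Proof.
case=> k lr; exists k; rewrite !word_num_cat !word_den_cat.
set a := word_den w1; set b := word_den w2.
have -> : a + (word_den r + b) + k = (word_den r + k) + (a + b) by lia.
have -> : a + (word_den l + b) + k = (word_den l + k) + (a + b) by lia.
rewrite (central_add (word_den r + k)) (central_add (word_den l + k)) -!catA; apply: be_catl.
have comm n : be (word_num w2 ++ central n ++ central (a + b))
    (central n ++ word_num w2 ++ central (a + b)).
  by rewrite !catA; apply: be_catr; apply: be_central_comm.
apply: be_trans (be_catl _ (comm _)) _; rewrite catA.
apply: be_trans (be_catr _ lr) _; rewrite -catA.
exact: be_catl (be_sym (comm _)).
Qed.

Lemma loc_eq_base l r : gamma_base op l r -> loc_eq l r.
Proof.
case=> [x|x|x y]; exists 0; rewrite /= ?cats0.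
- exact: be_cons_coinv.
- exact: be_coinv_rcons.
- apply: be_trans (be_catl _ (be_swap x y [::])) _.
  rewrite -[[:: y; op x y]]/([:: y] ++ [:: op x y]) catA.
  apply: be_trans (be_catr _ (be_coinv_rcons y)) _.
  exact: be_sym (be_central_comm 1 [:: op x y]).
Qed.

Lemma gamma_eq_loc_eq u v : gamma_eq op u v -> loc_eq u v.
Proof.
elim=> {u v} [u v [w1 [w2 [l [r [lr [-> ->]]]]]]| u | u v _ | u v w _ uv _ vw].
- exact: loc_eq_cat (loc_eq_base lr).
- exact: loc_eq_refl.
- exact: loc_eq_sym.
- exact: loc_eq_trans uv vw.
Qed.

End Rack.
End Braid.

Theorem theorem4p24 (X : finType) (op : X -> X -> X) (hrack : is_rack op) :
  exists N0 : nat, forall N : nat, N0 <= N ->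
    forall s t : seq X, in_SstarN op N s -> in_SstarN op N t ->
      gamma_eq op (to_word s) (to_word t) -> braid_equiv op s t.
Proof.
have [N0 cancel] := be_cancel_blocks_eventually hrack.
exists N0 => N le_N0 s t [_ [gs big_s]] [_ [gt _]] /(gamma_eq_loc_eq hrack)[k].
rewrite !word_num_to_word !word_den_to_word add0n => /cancel; apply=> // i.
by rewrite ffunE; apply: leq_trans le_N0 (big_s _).
Qed.
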